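(* Let $P$ be a finite poset and $\epsilon$ the covering-relation labeling induced by a labeling of $P$. Suppose that $\Omega(P,\epsilon;t)=\Omega(P,-\epsilon;t+s)$ for some $s\in\mathbb{Z}$. Then $-r(-\epsilon)\le s\le r(\epsilon)$. Moreover $s=r(\epsilon)$ holds if and only if $P$ is $\epsilon$-graded, and $s=-r(-\epsilon)$ holds if and only if $P$ is $\epsilon$-graded.
   Context: $P$ has $p$ elements, $\omega:P\to\{1,\dots,p\}$ a bijection; write $x\prec y$ if $y$ covers $x$, $\epsilon(x,y)=1$ if $\omega(x)<\omega(y)$, $-1$ otherwise; $-\epsilon$ is $(-\epsilon)(x,y)=-\epsilon(x,y)$ (induced by $p+1-\omega$). A $(P,\epsilon)$-partition is an order-reversing map $\sigma:P\to\{1,2,\dots\}$ with $\sigma(x)>\sigma(y)$ whenever $x\prec y$ and $\epsilon(x,y)=-1$; $\Omega(P,\epsilon;n)$ is the number of such with largest part at most $n$ (a polynomial in $n$). $r(\epsilon)=\max\sum_{i=1}^\ell\epsilon(x_{i-1},x_i)$ over all maximal chains $x_0\prec\cdots\prec x_\ell$ of $P$, and similarly for $r(-\epsilon)$. $P$ is $\epsilon$-graded if this sum is the same for all maximal chains. *)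

From mathcomp Require Import all_boot all_order all_algebra.
Set Implicit Arguments. Unset Strict Implicit. Unset Printing Implicit Defensive.
Import Order.TTheory GRing.Theory Num.Theory.

Section PPartitions.
Variables (d : Order.disp_t) (T : finPOrderType d).

Definition covers (x y : T) : bool :=
  (x < y)%O && [forall z : T, ~~ ((x < z)%O && (z < y)%O)].

Definition eps (p : nat) (omega : T -> 'I_p) (x y : T) : int :=
  if (omega x < omega y)%N then 1%R else (-1)%R.

Definition neg_eps (e : T -> T -> int) (x y : T) : int := (- e x y)%R.

(* (P,e)-partition with largest part at most n: sigma x in 'I_n encodes the
   part sigma x + 1 in {1,...,n}. *)
Definition is_partition (e : T -> T -> int) (n : nat) (sigma : {ffun T -> 'I_n}) : bool :=
  [forall x : T, forall y : T, ((x <= y)%O ==> (sigma y <= sigma x)%N) &&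
     ((covers x y && (e x y == (-1)%R)) ==> (sigma y < sigma x)%N)].

Definition Omega (e : T -> T -> int) (n : nat) : nat :=
  #|[set sigma : {ffun T -> 'I_n} | is_partition e sigma]|.

Definition max_chain (x0 : T) (s : seq T) : bool :=
  [&& path covers x0 s,
      [forall z : T, ~~ (z < x0)%O] &
      [forall z : T, ~~ (last x0 s < z)%O]].

Definition chain_sum (e : T -> T -> int) (x0 : T) (s : seq T) : int :=
  (\sum_(xy <- zip (x0 :: s) s) e xy.1 xy.2)%R.

Definition is_r (e : T -> T -> int) (r : int) : Prop :=
  (exists x0 s, max_chain x0 s /\ chain_sum e x0 s = r) /\
  (forall x0 s, max_chain x0 s -> (chain_sum e x0 s <= r)%R).

Definition graded (e : T -> T -> int) : Prop :=
  forall x0 s y0 t, max_chain x0 s -> max_chain y0 t ->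
    chain_sum e x0 s = chain_sum e y0 t.

End PPartitions.

From mathcomp Require Import all_boot all_order all_algebra zify.
Set Implicit Arguments. Unset Strict Implicit. Unset Printing Implicit Defensive.
Import Order.TTheory GRing.Theory Num.Theory.
Local Open Scope ring_scope.

(* Let e be a sign labeling with r = r(e).  Maximising over saturated chains
   one builds h : P -> Z with h y + e x y <= h x along covers and h = 0 on
   maximal elements, such that sigma |-> sigma + h maps (P,e)-partitions with
   parts < n injectively to (P,-e)-partitions with parts < n + r.  Hence
   Omega(P,e;n) <= Omega(P,-e;n+r), and as Omega(P,-e;.) is strictly increasing
   from #|P| on, Omega(P,e;t) = Omega(P,-e;t+s) forces s <= r(e); applied to -e
   it gives -s <= r(-e).  When s = r(e) the map is onto, and pulling back two
   extremal (P,-e)-partitions shows h x = h y + e x y along covers and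
   h m >= r at minimal elements, so every maximal chain has e-sum exactly r.
   Conversely, if P is graded then r(-e) = -r(e) and the bounds meet. *)

Section Chains.
Variables (d : Order.disp_t) (T : finPOrderType d).
Implicit Types (x y z m : T) (s : seq T) (w : T -> T -> int) (v c : T -> int).
Local Notation covering_path := (path (@covers d T)).

Definition minimal x : bool := [forall z, ~~ (z < x)%O].
Definition maximal x : bool := [forall z, ~~ (x < z)%O].

Lemma max_chainE x s :
  max_chain x s = [&& covering_path x s, minimal x & maximal (last x s)].
Proof. by []. Qed.

Lemma chain_sum_nil w x : chain_sum w x [::] = 0.
Proof. exact: big_nil. Qed.

Lemma chain_sum_cons w x y s : chain_sum w x (y :: s) = w x y + chain_sum w y s.
Proof. exact: big_cons. Qed.

Lemma chain_sum_cat w x s1 s2 :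
  chain_sum w x (s1 ++ s2) = chain_sum w x s1 + chain_sum w (last x s1) s2.
Proof.
elim: s1 x => [|y s1 IHs] x /=; first by rewrite chain_sum_nil add0r.
by rewrite !chain_sum_cons IHs addrA.
Qed.

Lemma chain_sum_neg w x s : chain_sum (neg_eps w) x s = - chain_sum w x s.
Proof. exact: sumrN. Qed.

Lemma ler_chain_sum w w' x s :
  (forall x y, w x y <= w' x y) -> chain_sum w x s <= chain_sum w' x s.
Proof. by move=> le_w; apply: ler_sum. Qed.

Lemma chain_sum_path_le w v x s :
  (forall x y, covers x y -> v y + w x y <= v x) -> covering_path x s ->
  v (last x s) + chain_sum w x s <= v x.
Proof.
move=> v_cover; elim: s x => [|y s IHs] x /=; first by rewrite chain_sum_nil addr0.
case/andP=> cov_xy /IHs; rewrite chain_sum_cons; have := v_cover _ _ cov_xy; lia.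
Qed.

Lemma covers_lt x y : covers x y -> (x < y)%O.
Proof. by case/andP. Qed.

Lemma covering_path_lt_last x y s : covering_path x (y :: s) -> (x < last y s)%O.
Proof.
move=> /(sub_path covers_lt) /(order_path_min lt_trans) /allP; apply.
exact: mem_last.
Qed.

Lemma covering_path_le_last x s : covering_path x s -> (x <= last x s)%O.
Proof. by case: s => // y s /covering_path_lt_last /ltW. Qed.

Lemma covering_path_loop x s : covering_path x s -> last x s = x -> s = [::].
Proof. by case: s => // y s /covering_path_lt_last + /= last_x; rewrite last_x ltxx. Qed.

Lemma covering_path_cover x y s :
  covers x y -> covering_path x s -> last x s = y -> s = [:: y].
Proof.
move=> cov_xy; case: s => [_ /= y_x|z s /= /andP[cov_xz path_z] last_y].
  by move: (covers_lt cov_xy); rewrite y_x ltxx.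
have le_zy : (z <= y)%O by rewrite -last_y covering_path_le_last.
have [eq_zy|ne_zy] := eqVneq z y.
  by move: last_y; rewrite -eq_zy => /(covering_path_loop path_z) ->.
move: cov_xy => /andP[_ /forallP /(_ z)].
by rewrite (covers_lt cov_xz) lt_neqAle ne_zy le_zy.
Qed.

Lemma covering_path_size x s : covering_path x s -> (size s < #|T|)%N.
Proof.
move=> /(sub_path covers_lt) path_lt.
have /card_uniqP card_s := lt_sorted_uniq (path_lt : sorted <%O (x :: s)).
by have := max_card (mem (x :: s)); rewrite card_s.
Qed.

Lemma maximal_path x s : maximal x -> covering_path x s -> s = [::].
Proof.
case: s => // y s /forallP /(_ (last y s)) + /covering_path_lt_last lt_x.
by rewrite lt_x.
Qed.

Lemma minimal_le x y : minimal x -> (y <= x)%O -> y = x.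
Proof.
move=> /forallP /(_ y); rewrite le_eqVlt => /negPf -> /orP[/eqP //|//].
Qed.

Lemma covers_or_between x y : (x < y)%O ->
  covers x y \/ exists2 z, (x < z)%O & (z < y)%O.
Proof.
move=> lt_xy; have [cov_xy|not_cov] := boolP (covers x y); [by left | right].
move: not_cov; rewrite /covers lt_xy negb_forall => /existsP[z].
by rewrite negbK => /andP[]; exists z.
Qed.

Lemma ex_covering_path x y : (x <= y)%O ->
  exists2 s, covering_path x s & last x s = y.
Proof.
have [k] := ubnP #|[set z | (x < z < y)%O]|; elim: k x y => // k IHk x y size_xy.
rewrite le_eqVlt => /predU1P[<-|lt_xy]; first by exists [::].
have [cov_xy|[z lt_xz lt_zy]] := covers_or_between lt_xy.
  by exists [:: y]; rewrite /= ?cov_xy.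
have smaller a b : (x <= a)%O -> (b <= y)%O -> ~~ (a < z < b)%O ->
    (#|[set u | (a < u < b)%O]| < k)%N.
  move=> le_xa le_by z_out; rewrite -ltnS; apply: leq_trans size_xy.
  apply: proper_card; apply/properP; split; last by exists z; rewrite !inE ?lt_xz.
  apply/subsetP => u; rewrite !inE => /andP[lt_au lt_ub].
  by rewrite (le_lt_trans le_xa lt_au) (lt_le_trans lt_ub le_by).
have [s1 path1 last1] : exists2 s, covering_path x s & last x s = z.
  by apply: IHk (ltW lt_xz); apply: smaller; rewrite ?lexx ?ltxx ?andbF ?(ltW lt_zy).
have [s2 path2 last2] : exists2 s, covering_path z s & last z s = y.
  by apply: IHk (ltW lt_zy); apply: smaller; rewrite ?lexx ?ltxx ?(ltW lt_xz).
by exists (s1 ++ s2); rewrite ?cat_path ?last_cat last1 ?path1 ?path2.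
Qed.

Lemma ex_minimal_le x : exists2 m, minimal m & (m <= x)%O.
Proof.
have [m le_mx m_min] :=
  arg_minnP (P := fun z => (z <= x)%O) (fun z => #|[set u | (u < z)%O]|) (lexx x).
exists m => //; apply/forallP => z; apply/negP => lt_zm.
have := m_min z (le_trans (ltW lt_zm) le_mx); apply/negP; rewrite -ltnNge.
apply: proper_card; apply/properP; split; last by exists z; rewrite !inE ?ltxx.
by apply/subsetP => u; rewrite !inE => /lt_trans; apply.
Qed.

Lemma ex_maximal_ge x : exists2 M, maximal M & (x <= M)%O.
Proof.
have [M le_xM M_max] :=
  arg_minnP (P := fun z => (x <= z)%O) (fun z => #|[set u | (z < u)%O]|) (lexx x).
exists M => //; apply/forallP => z; apply/negP => lt_Mz.
have := M_max z (le_trans le_xM (ltW lt_Mz)); apply/negP; rewrite -ltnNge.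
apply: proper_card; apply/properP; split; last by exists z; rewrite !inE ?ltxx.
by apply/subsetP => u; rewrite !inE; apply: lt_trans.
Qed.

Lemma ex_covering_path_argmax x (F : seq T -> int) :
  exists2 s, covering_path x s & forall s', covering_path x s' -> F s' <= F s.
Proof.
pose short_seq := {k : 'I_#|T| & k.-tuple T}.
pose of_path s (path_s : covering_path x s) : short_seq :=
  Tagged (fun k : 'I_#|T| => k.-tuple T)
    (i := Ordinal (covering_path_size path_s)) (in_tuple s).
have path_nil : covering_path x [::] by [].
have [u path_u u_max] := arg_maxP (i0 := of_path _ path_nil)
  (P := fun u : short_seq => covering_path x (tagged u)) (fun u => F (tagged u)) path_nil.
by exists (tagged u) => // s' path_s'; apply: u_max (of_path _ path_s') path_s'.
Qed.

Definition max_weight w c (tau : T -> int) : Prop :=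
  (forall z s, covering_path z s -> c (last z s) + chain_sum w z s <= tau z) /\
  (forall z, exists2 s, covering_path z s & tau z = c (last z s) + chain_sum w z s).

Lemma max_weight_exists w c : exists tau, max_weight w c tau.
Proof.
pose weight z s := c (last z s) + chain_sum w z s.
have /fin_all_exists[tau tauP] : forall z, exists t : int,
    (forall s, covering_path z s -> weight z s <= t) /\
    exists2 s, covering_path z s & t = weight z s.
  move=> z; have [s path_s s_max] := ex_covering_path_argmax z (weight z).
  by exists (weight z s); split => //; exists s.
by exists tau; split=> z; have [] := tauP z.
Qed.

Lemma max_weight_ge w c tau z : max_weight w c tau -> c z <= tau z.
Proof. by case=> /(_ z [::] isT); rewrite chain_sum_nil addr0. Qed.

Lemma max_weight_cover w c tau x y :
  max_weight w c tau -> covers x y -> tau y + w x y <= tau x.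
Proof.
move=> [tau_ge tau_eq] cov_xy; have [s path_s ->] := tau_eq y.
have := tau_ge x (y :: s); rewrite /= cov_xy chain_sum_cons => /(_ path_s).
by rewrite -addrA (addrC (chain_sum w y s)).
Qed.

End Chains.

Section Partitions.
Variables (d : Order.disp_t) (T : finPOrderType d).
Implicit Types (x y z : T) (s : seq T) (e : T -> T -> int) (v c : T -> int).
Local Notation covering_path := (path (@covers d T)).

Definition descent e x y : int := (e x y == -1 : nat)%:Z.

Definition sign_valued e : Prop := forall x y, e x y = 1 \/ e x y = -1.

Lemma descent_bounds e x y : 0 <= descent e x y <= 1.
Proof. by rewrite /descent; case: eqP. Qed.

Lemma sign_valued_neg e : sign_valued e -> sign_valued (neg_eps e).
Proof. by move=> e_sign x y; rewrite /neg_eps; case: (e_sign x y) => ->; auto. Qed.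

Lemma sign_descentE e x y :
  sign_valued e -> e x y = descent (neg_eps e) x y - descent e x y.
Proof. by move=> e_sign; rewrite /descent /neg_eps; case: (e_sign x y) => ->. Qed.

Lemma chain_sum_descent_bounds e x s :
  covering_path x s -> 0 <= chain_sum (descent e) x s < #|T|%:Z.
Proof.
move/covering_path_size; suff: 0 <= chain_sum (descent e) x s <= (size s)%:Z by lia.
elim: s x => [|y s IHs] x /=; first by rewrite chain_sum_nil.
by rewrite chain_sum_cons; have := IHs y; have := descent_bounds e x y; lia.
Qed.

Lemma chain_sum_sign_ge e x s :
  sign_valued e -> - chain_sum (descent e) x s <= chain_sum e x s.
Proof.
move=> e_sign; rewrite -chain_sum_neg; apply: ler_chain_sum => a b.
by rewrite /neg_eps (sign_descentE a b e_sign); have := descent_bounds (neg_eps e) a b; lia.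
Qed.

Lemma partitionP e n (sg : {ffun T -> 'I_n}) :
  reflect (forall x y, covers x y -> (sg y)%:Z + descent e x y <= (sg x)%:Z)
          (is_partition e sg).
Proof.
apply: (iffP forallP) => [sgP x y cov_xy|sgP x].
  have /forallP/(_ y) := sgP x; rewrite cov_xy (ltW (covers_lt cov_xy)) /descent.
  by case: eqP => _ /andP[le_yx lt_yx]; lia.
apply/forallP => y; apply/andP; split; apply/implyP.
  move=> /ex_covering_path[s path_s last_s].
  have := chain_sum_path_le sgP path_s; have := chain_sum_descent_bounds e path_s.
  by rewrite last_s; lia.
by case/andP=> /sgP + /eqP desc; rewrite /descent desc eqxx; lia.
Qed.

Lemma partition_path_le e n (sg : {ffun T -> 'I_n}) x s :
  is_partition e sg -> covering_path x s ->
  (sg (last x s))%:Z + chain_sum (descent e) x s <= (sg x)%:Z.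
Proof. by move=> /partitionP; apply: chain_sum_path_le. Qed.

Lemma eq_Omega e e' : e =2 e' -> Omega e =1 Omega e'.
Proof.
move=> eq_e n; apply: eq_card => sg; rewrite !inE.
by apply/partitionP/partitionP => sgP x y /sgP; rewrite /descent eq_e.
Qed.

Definition int_ffun N v : {ffun T -> 'I_N.+1} := [ffun x => inord (absz (v x))].

Lemma int_ffunE N v x : 0 <= v x < N.+1%:Z -> (int_ffun N v x)%:Z = v x.
Proof. by move=> v_x; rewrite ffunE inordK; lia. Qed.

Lemma int_ffun_partition e N v :
  (forall x, 0 <= v x < N.+1%:Z) ->
  (forall x y, covers x y -> v y + descent e x y <= v x) ->
  is_partition e (int_ffun N v).
Proof.
by move=> v_bounds v_cover; apply/partitionP => x y /v_cover; rewrite !int_ffunE.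
Qed.

Lemma max_weight_partition e N c tau :
  max_weight (descent e) c tau -> (forall z, 0 <= c z) -> (forall z, tau z <= N%:Z) ->
  is_partition e (int_ffun N tau).
Proof.
move=> tauP c_ge0 tau_le.
apply: int_ffun_partition => [z|x y]; last exact: max_weight_cover tauP.
by have := max_weight_ge z tauP; have := c_ge0 z; have := tau_le z; lia.
Qed.

Lemma Omega_ltS e m : (0 < #|T|)%N -> (#|T| <= m)%N -> (Omega e m < Omega e m.+1)%N.
Proof.
move=> /card_gt0P[x0 _] le_Tm; rewrite /Omega.
pose A := [set sg : {ffun T -> 'I_m} | is_partition e sg].
pose succ (sg : {ffun T -> 'I_m}) := int_ffun m (fun x => (sg x)%:Z + 1).
have succ_bounds (sg : {ffun T -> 'I_m}) x : 0 <= (sg x)%:Z + 1 < m.+1%:Z.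
  by have := ltn_ord (sg x); lia.
have succE (sg : {ffun T -> 'I_m}) x : (succ sg x)%:Z = (sg x)%:Z + 1 by rewrite int_ffunE.
have succ_inj : {in A &, injective succ}.
  move=> sg1 sg2 _ _ /ffunP succ12; apply/ffunP => x; apply/val_inj.
  by have := congr1 (fun i : 'I_m.+1 => (i : nat)%:Z) (succ12 x); rewrite /= !succE; lia.
(* The least (P,e)-partition vanishes at maximal elements, so succ misses it. *)
have [tau0 tau0P] := max_weight_exists (descent e) (fun=> 0).
have tau0_bounds z : 0 <= tau0 z < m.+1%:Z.
  have [s path_s ->] := tau0P.2 z; have := chain_sum_descent_bounds e path_s; lia.
have [M M_max _] := ex_maximal_ge x0.
have tau0_M : tau0 M = 0.
  by have [s /(maximal_path M_max) -> ->] := tau0P.2 M; rewrite chain_sum_nil.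
rewrite -(card_in_imset succ_inj); apply: proper_card; apply/properP; split.
  apply/subsetP => t /imsetP[sg]; rewrite !inE => /partitionP sgP ->.
  by apply: int_ffun_partition => [|x y /sgP]; [exact: succ_bounds | lia].
exists (int_ffun m tau0).
  by rewrite !inE; apply: max_weight_partition tau0P _ _ => // z; have := tau0_bounds z; lia.
apply/imsetP => -[sg _ /ffunP/(_ M)/(congr1 (fun i : 'I_m.+1 => (i : nat)%:Z))].
by rewrite /= succE int_ffunE // tau0_M; lia.
Qed.

Lemma Omega_lt e m m' :
  (0 < #|T|)%N -> (#|T| <= m)%N -> (m < m')%N -> (Omega e m < Omega e m')%N.
Proof.
move=> T_gt0 le_Tm lt_mm'; have le_Tm' := leq_trans le_Tm (ltnW lt_mm').
rewrite -(subnKC le_Tm) -(subnKC le_Tm').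
apply: (homo_ltn (f := fun k => Omega e (#|T| + k)) ltn_trans); last lia.
by move=> k; rewrite addnS; apply: Omega_ltS; rewrite ?leq_addr.
Qed.

End Partitions.

Section ShiftMap.
Variables (d : Order.disp_t) (T : finPOrderType d).
Variables (e : T -> T -> int) (r : int) (h : T -> int).
Local Notation covering_path := (path (@covers d T)).

Hypothesis e_sign : sign_valued e.
Hypothesis h_cover : forall x y, covers x y -> h y + e x y <= h x.
Hypothesis h_low :
  forall x, exists2 s, covering_path x s & 0 <= h x + chain_sum (descent e) x s.
Hypothesis h_up : forall x, exists m s,
  [/\ covering_path m s, last m s = x & h x <= r + chain_sum (descent e) m s].

Variables (n N : nat).
Hypothesis nNr : N.+1%:Z = n%:Z + r.

Lemma shift_bounds (sg : {ffun T -> 'I_n}) x :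
  is_partition e sg -> 0 <= (sg x)%:Z + h x < N.+1%:Z.
Proof.
move=> sgP; have [s path_s h_s] := h_low x; have [m [s' [path_s' last_s' h_s']]] := h_up x.
have := partition_path_le sgP path_s; have := partition_path_le sgP path_s'.
by rewrite last_s'; have := ltn_ord (sg m); lia.
Qed.

Lemma shift_cover (sg : {ffun T -> 'I_n}) x y : is_partition e sg -> covers x y ->
  (sg y)%:Z + h y + descent (neg_eps e) x y <= (sg x)%:Z + h x.
Proof.
move=> /partitionP sgP cov_xy; have := sgP x y cov_xy; have := h_cover cov_xy.
by rewrite (sign_descentE x y e_sign); lia.
Qed.

Let shift (sg : {ffun T -> 'I_n}) := int_ffun N (fun x => (sg x)%:Z + h x).
Let partitions := [set sg : {ffun T -> 'I_n} | is_partition e sg].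
Let neg_partitions := [set tau : {ffun T -> 'I_N.+1} | is_partition (neg_eps e) tau].

Lemma shiftE (sg : {ffun T -> 'I_n}) x :
  is_partition e sg -> (shift sg x)%:Z = (sg x)%:Z + h x.
Proof. by move=> sgP; rewrite int_ffunE // shift_bounds. Qed.

Lemma shift_inj : {in partitions &, injective shift}.
Proof.
move=> sg1 sg2; rewrite !inE => sg1P sg2P /ffunP shift12; apply/ffunP => x.
apply/val_inj; have := congr1 (fun i : 'I_N.+1 => (i : nat)%:Z) (shift12 x).
by rewrite /= !shiftE //; lia.
Qed.

Lemma shift_sub : shift @: partitions \subset neg_partitions.
Proof.
apply/subsetP => t /imsetP[sg]; rewrite !inE => sgP ->.
apply: int_ffun_partition => [x|x y]; [exact: shift_bounds | exact: shift_cover].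
Qed.

Lemma Omega_le_shift : (Omega e n <= Omega (neg_eps e) N.+1)%N.
Proof. by rewrite /Omega -(card_in_imset shift_inj) subset_leq_card ?shift_sub. Qed.

Hypothesis Omega_eq : Omega e n = Omega (neg_eps e) N.+1.

Lemma unshift_partition (t : T -> int) :
  (forall x, 0 <= t x < N.+1%:Z) ->
  (forall x y, covers x y -> t y + descent (neg_eps e) x y <= t x) ->
  (forall x y, covers x y -> t y - h y + descent e x y <= t x - h x) /\
  (forall x, t x - h x < n%:Z).
Proof.
move=> t_bounds t_cover.
have /imsetP[sg] : int_ffun N t \in shift @: partitions.
  have /subset_cardP onto : #|shift @: partitions| = #|neg_partitions|.
    by rewrite (card_in_imset shift_inj); exact: Omega_eq.
  by rewrite (onto shift_sub) inE int_ffun_partition.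
rewrite inE => /[dup] /partitionP sgP sg_part /ffunP t_sg.
have tE x : t x - h x = (sg x)%:Z.
  have := congr1 (fun i : 'I_N.+1 => (i : nat)%:Z) (t_sg x).
  by rewrite /= int_ffunE // shiftE //; lia.
by split=> [x y /sgP|x]; rewrite !tE // ltz_nat ltn_ord.
Qed.

Lemma shift_cover_tight x y :
  (2 * #|T| <= N.+1)%N -> covers x y -> h x <= h y + e x y.
Proof.
move=> large cov_xy.
(* t is the least (P,-e)-partition that is at least #|T| at y. *)
pose c z : int := if z == y then #|T|%:Z else 0.
have [t tP] := max_weight_exists (descent (neg_eps e)) c.
have c_bounds z : 0 <= c z <= #|T|%:Z by rewrite /c; case: eqP; lia.
have t_bounds z : 0 <= t z < N.+1%:Z.
  have := max_weight_ge z tP; have [s path_s ->] := tP.2 z.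
  have := c_bounds z; have := c_bounds (last z s).
  by have := chain_sum_descent_bounds (neg_eps e) path_s; lia.
have t_y : #|T|%:Z <= t y by have := max_weight_ge y tP; rewrite /c eqxx.
have t_x : t x <= #|T|%:Z + descent (neg_eps e) x y.
  have [s path_s ->] := tP.2 x; rewrite /c; case: eqP => [last_y|_].
    rewrite (covering_path_cover cov_xy path_s last_y).
    by rewrite chain_sum_cons chain_sum_nil addr0.
  have := chain_sum_descent_bounds (neg_eps e) path_s.
  by have := descent_bounds (neg_eps e) x y; lia.
have [t_cover _] := unshift_partition t_bounds (fun a b => max_weight_cover tP).
by have := t_cover x y cov_xy; rewrite (sign_descentE x y e_sign); lia.
Qed.

Lemma shift_minimal_ge m : (#|T| <= N)%N -> minimal m -> r <= h m.
Proof.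
move=> large m_min.
(* t is the least (P,-e)-partition that takes the largest value N at m. *)
pose c z : int := if z == m then N%:Z else 0.
have [t tP] := max_weight_exists (descent (neg_eps e)) c.
have t_bounds z : 0 <= t z < N.+1%:Z.
  have [s path_s t_z] := tP.2 z; have := max_weight_ge z tP; rewrite t_z /c.
  have := chain_sum_descent_bounds (neg_eps e) path_s.
  have [last_m|_] := eqVneq (last z s) m; last by case: (z == m); lia.
  have le_zm : (z <= m)%O by rewrite -last_m covering_path_le_last.
  move: path_s last_m; rewrite (minimal_le m_min le_zm) => path_m.
  move=> /(covering_path_loop path_m) ->.
  by rewrite chain_sum_nil eqxx; lia.
have t_m : N%:Z <= t m by have := max_weight_ge m tP; rewrite /c eqxx.
have [_ t_lt] := unshift_partition t_bounds (fun a b => max_weight_cover tP).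
by have := t_lt m; lia.
Qed.

End ShiftMap.

Section Grading.
Variables (d : Order.disp_t) (T : finPOrderType d).
Implicit Types (e : T -> T -> int) (r : int).
Local Notation covering_path := (path (@covers d T)).

Lemma eps_sign p (omega : T -> 'I_p) : sign_valued (eps omega).
Proof. by move=> x y; rewrite /eps; case: ifP; auto. Qed.

Lemma graded_neg e : graded (neg_eps e) -> graded e.
Proof.
move=> neg_graded x s y t x_s y_t; apply: oppr_inj.
by rewrite -!chain_sum_neg; apply: neg_graded.
Qed.

Lemma graded_is_r_neg e r r' : graded e -> is_r e r -> is_r (neg_eps e) r' -> r' = - r.
Proof.
move=> e_graded [[x [s [x_s <-]]] _] [[y [t [y_t <-]]] _].
by rewrite chain_sum_neg (e_graded y t x s).
Qed.

Lemma ex_shift_potential e r : sign_valued e ->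
  (forall x s, max_chain x s -> chain_sum e x s <= r) ->
  exists h : T -> int,
  [/\ forall x y, covers x y -> h y + e x y <= h x,
      forall x, exists2 s, covering_path x s & 0 <= h x + chain_sum (descent e) x s,
      forall x, exists m s,
        [/\ covering_path m s, last m s = x & h x <= r + chain_sum (descent e) m s] &
      forall M, maximal M -> h M = 0].
Proof.
move=> e_sign r_max.
have [D DP] := max_weight_exists (descent e) (fun=> 0).
have [h hP] := max_weight_exists e (fun z => - D z).
exists h; split.
- by move=> x y; apply: max_weight_cover hP.
- move=> x; have [s path_s D_x] := DP.2 x; exists s => //.
  by have := max_weight_ge x hP; rewrite D_x; lia.
- (* Completing the chains realising h x and D y to a maximal chain, whose
     e-sum is at most r, bounds h x from above. *)
  move=> x; have [s2 path2 h_x] := hP.2 x; set y := last x s2 in h_x.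
  have [s3 path3 _] := DP.2 y; set z := last y s3.
  have [M M_max le_zM] := ex_maximal_ge z; have [s4 path4 last4] := ex_covering_path le_zM.
  have [m m_min le_mx] := ex_minimal_le x; have [s1 path1 last1] := ex_covering_path le_mx.
  exists m, s1; split => //.
  have := DP.1 y (s3 ++ s4); rewrite cat_path path3 path4 chain_sum_cat -/z => /(_ isT).
  have chain : max_chain m (s1 ++ s2 ++ s3 ++ s4).
    rewrite max_chainE !cat_path !last_cat last1 -/y -/z last4.
    by rewrite path1 path2 path3 path4 m_min.
  have := r_max _ _ chain; rewrite !chain_sum_cat last1 -/y -/z.
  have := chain_sum_sign_ge m s1 e_sign; have := chain_sum_sign_ge y s3 e_sign.
  by have := chain_sum_sign_ge z s4 e_sign; lia.
- move=> M M_max; have [s /(maximal_path M_max) -> ->] := hP.2 M.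
  by have [s' /(maximal_path M_max) -> ->] := DP.2 M; rewrite !chain_sum_nil; lia.
Qed.

Lemma le_r_of_Omega_shift e r s : sign_valued e -> is_r e r ->
  (forall n N : nat, N%:Z = n%:Z + s -> Omega e n = Omega (neg_eps e) N) ->
  s <= r.
Proof.
move=> e_sign [[x0 _] r_max] Omega_shift; rewrite leNgt; apply/negP => lt_rs.
have [h [h_cover h_low h_up _]] := ex_shift_potential e_sign r_max.
pose N := (#|T| + `|r| + `|s|)%N.
have [n nNr] : exists n : nat, N.+1%:Z = n%:Z + r by exists (absz (N.+1%:Z - r)); lia.
have [M nMs] : exists M : nat, M%:Z = n%:Z + s by exists (absz (n%:Z + s)); lia.
have := Omega_le_shift e_sign h_cover h_low h_up nNr; rewrite (Omega_shift n M nMs).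
apply/negP; rewrite -ltnNge; apply: Omega_lt; last lia.
  by apply/card_gt0P; exists x0.
by rewrite /N -addnA ltnW // ltnS leq_addr.
Qed.

Lemma graded_of_Omega_shift e r : sign_valued e -> is_r e r ->
  (forall n N : nat, N%:Z = n%:Z + r -> Omega e n = Omega (neg_eps e) N) ->
  graded e.
Proof.
move=> e_sign [_ r_max] Omega_shift.
have [h [h_cover h_low h_up h_max]] := ex_shift_potential e_sign r_max.
pose N := (2 * #|T| + `|r|)%N.
have [n nNr] : exists n : nat, N.+1%:Z = n%:Z + r by exists (absz (N.+1%:Z - r)); lia.
have Omega_eq := Omega_shift n N.+1 nNr.
have h_tight x y : covers x y -> - h y + neg_eps e x y <= - h x.
  have large : (2 * #|T| <= N.+1)%N by lia.
  move=> cov_xy; rewrite /neg_eps.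
  by have := shift_cover_tight e_sign h_cover h_low h_up nNr Omega_eq large cov_xy; lia.
have h_min m : minimal m -> r <= h m.
  by apply: (shift_minimal_ge e_sign h_cover h_low h_up nNr Omega_eq); lia.
suff chain_r x s : max_chain x s -> chain_sum e x s = r.
  by move=> x s y t /chain_r -> /chain_r ->.
move=> /[dup] /r_max le_r; rewrite max_chainE => /and3P[path_s x_min last_max].
have := chain_sum_path_le h_tight path_s; rewrite chain_sum_neg h_max //.
by have := h_min x x_min; lia.
Qed.

End Grading.

Lemma eq_shift_of_poly (R : numDomainType) (f g : nat -> nat) (p q : {poly R}) (s : int) :
  (forall n : nat, p.[n%:R] = (f n)%:R) -> (forall n : nat, q.[n%:R] = (g n)%:R) ->
  (forall t, p.[t] = q.[t + s%:~R]) ->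
  forall n N : nat, N%:Z = n%:Z + s -> f n = g N.
Proof.
move=> pE qE pq n N nNs; apply/eqP; rewrite -(eqr_nat R) -pE -qE pq.
by rewrite !pmulrn -intrD -nNs.
Qed.

Theorem corollary7p4 (d : Order.disp_t) (T : finPOrderType d)
  (omega : T -> 'I_#|T|) (homega : bijective omega)
  (pe pne : {poly rat})
  (hpe : forall n : nat, pe.[n%:R] = (Omega (eps omega) n)%:R)
  (hpne : forall n : nat, pne.[n%:R] = (Omega (neg_eps (eps omega)) n)%:R)
  (s : int)
  (hs : forall t : rat, pe.[t] = pne.[t + s%:~R])
  (r1 r2 : int)
  (hr1 : is_r (eps omega) r1)
  (hr2 : is_r (neg_eps (eps omega)) r2) :
  (- r2 <= s <= r1)%R /\
  (s = r1 <-> graded (eps omega)) /\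
  (s = - r2 <-> graded (eps omega))%R.
Proof.
set e := eps omega in hpe hpne hr1 hr2 *.
have e_sign : sign_valued e := eps_sign omega.
have shift := eq_shift_of_poly hpe hpne hs.
have neg_negE : neg_eps (neg_eps e) =2 e by move=> x y; exact: opprK.
have shift_neg (n N : nat) : N%:Z = n%:Z + - s ->
    Omega (neg_eps e) n = Omega (neg_eps (neg_eps e)) N.
  by move=> nNs; rewrite (eq_Omega neg_negE); apply/esym/shift; lia.
have le_s_r1 := le_r_of_Omega_shift e_sign hr1 shift.
have le_s_r2 := le_r_of_Omega_shift (sign_valued_neg e_sign) hr2 shift_neg.
have graded_s : graded e -> s = r1 /\ s = - r2.
  by move=> e_graded; have := graded_is_r_neg e_graded hr1 hr2; lia.
split; first lia.
split; split=> [s_r|/graded_s[]//].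
  by apply: graded_of_Omega_shift e_sign hr1 _; rewrite -s_r.
apply/graded_neg/(graded_of_Omega_shift (sign_valued_neg e_sign) hr2).
by move=> n N nNr; apply: shift_neg; lia.
Qed.
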